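(* Suppose Assumptions (A1), (A2), (A3) and (LIN) hold, and let $x\in\mathcal{X}$ be such that $y^*(x)$ is a single point. Then for every $i\in\{1,\dots,k\}$, $\displaystyle\lim_{t\to0^+}\frac{t}{-h_i(x,y_t^*(x))}=\lambda_i(x)$.
   Context: Let $f,g,h_1,\dots,h_k:\mathbb{R}^n\times\mathbb{R}^m\to\mathbb{R}$ and $\mathcal{X}\subseteq\mathbb{R}^n$. For $x\in\mathcal{X}$ let $\mathcal{Y}(x)=\{y: h_i(x,y)\le 0,\ i=1,\dots,k\}$ and $y^*(x)=\arg\min_{y\in\mathcal{Y}(x)} g(x,y)$. For $t>0$ let $\widetilde g_t(x,y)=g(x,y)-t\sum_{i=1}^k\log(-h_i(x,y))$ (defined when all $h_i(x,y)<0$) and $y_t^*(x)=\arg\min_y\widetilde g_t(x,y)$. $\lambda_i(x)\ge0$ denotes the optimal KKT multiplier of the $i$-th constraint of the lower-level problem at $y^*(x)$. Assumptions: (A1) $f$ once and $g,h_i$ twice continuously differentiable; (A2) $\mathcal{X}$ convex and compact and for every $x\in\mathcal{X}$ there is $y$ with $h_i(x,y)<0$ for all $i$; (A3) (LICQ) for every $x\in\mathcal{X}$ and $y\in y^*(x)$, $\{\nabla_y h_i(x,y): h_i(x,y)=0\}$ is linearly independent; (LIN) for every $x\in\mathcal{X}$, $g(x,\cdot)$ and all $h_i(x,\cdot)$ are linear (affine) in $y$ and $\mathcal{Y}(x)$ is compact. *)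

From mathcomp Require Import all_boot all_order all_algebra.
From mathcomp Require Import all_classical all_reals all_analysis.
Set Implicit Arguments. Unset Strict Implicit. Unset Printing Implicit Defensive.
Import Order.TTheory GRing.Theory Num.Theory.
Import numFieldNormedType.Exports.
Local Open Scope classical_set_scope.
Local Open Scope ring_scope.

(* continuously differentiable on the whole (finite-dimensional) space:
   differentiable everywhere, and every directional derivative is continuous
   (in finite dimension this is continuity of the derivative). *)
Definition C1 (R : realType) (V : normedModType R) (F : V -> R) : Prop :=
  (forall p, differentiable F p) /\ (forall v : V, continuous (fun p => 'D_v F p)).

Definition C2 (R : realType) (V : normedModType R) (F : V -> R) : Prop :=
  C1 F /\ (forall v : V, C1 (fun p => 'D_v F p)).

Definition uncurryF (R : realType) (n m : nat) (F : 'rV[R]_n -> 'rV[R]_m -> R)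
  : 'rV[R]_n * 'rV[R]_m -> R := fun p => F p.1 p.2.

Definition convex_setR (R : realType) (n : nat) (X : set 'rV[R]_n) : Prop :=
  forall a b (t : R), X a -> X b -> 0 <= t -> t <= 1 ->
    X (t *: a + (1 - t) *: b).

Definition affine (R : realType) (m : nat) (F : 'rV[R]_m -> R) : Prop :=
  exists (a : 'rV[R]_m) (c : R), forall y, F y = \sum_(j < m) a 0 j * y 0 j + c.

Definition Yset (R : realType) (n m k : nat)
  (h : 'I_k -> 'rV[R]_n -> 'rV[R]_m -> R) (x : 'rV[R]_n) : set 'rV[R]_m :=
  [set y | forall i, h i x y <= 0].

Definition ystar (R : realType) (n m k : nat) (g : 'rV[R]_n -> 'rV[R]_m -> R)
  (h : 'I_k -> 'rV[R]_n -> 'rV[R]_m -> R) (x : 'rV[R]_n) : set 'rV[R]_m :=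
  [set y | Yset h x y /\ forall z, Yset h x z -> g x y <= g x z].

Definition barrier (R : realType) (n m k : nat) (g : 'rV[R]_n -> 'rV[R]_m -> R)
  (h : 'I_k -> 'rV[R]_n -> 'rV[R]_m -> R) (t : R) (x : 'rV[R]_n) (y : 'rV[R]_m) : R :=
  g x y - t * \sum_(i < k) ln (- h i x y).

Definition is_barrier_min (R : realType) (n m k : nat) (g : 'rV[R]_n -> 'rV[R]_m -> R)
  (h : 'I_k -> 'rV[R]_n -> 'rV[R]_m -> R) (t : R) (x : 'rV[R]_n) (y : 'rV[R]_m) : Prop :=
  (forall i, h i x y < 0) /\
  (forall z, (forall i, h i x z < 0) -> barrier g h t x y <= barrier g h t x z).

Definition LICQ (R : realType) (n m k : nat)
  (h : 'I_k -> 'rV[R]_n -> 'rV[R]_m -> R) (x : 'rV[R]_n) (y : 'rV[R]_m) : Prop :=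
  forall c : 'I_k -> R,
    (forall i, h i x y != 0 -> c i = 0) ->
    (forall v : 'rV[R]_m, \sum_(i < k) c i * 'D_v (h i x) y = 0) ->
    forall i, c i = 0.

Definition KKT_mult (R : realType) (n m k : nat) (g : 'rV[R]_n -> 'rV[R]_m -> R)
  (h : 'I_k -> 'rV[R]_n -> 'rV[R]_m -> R) (x : 'rV[R]_n) (y : 'rV[R]_m)
  (lam : 'I_k -> R) : Prop :=
  (forall i, 0 <= lam i) /\
  (forall i, lam i * h i x y = 0) /\
  (forall v : 'rV[R]_m, 'D_v (g x) y + \sum_(i < k) lam i * 'D_v (h i x) y = 0).

(* Under (LIN) write g(x,.) = <a,.> + c and h_i(x,.) = <b_i,.> + d_i. Fermat's rule along
   lines through the barrier minimiser y_t gives a + sum_i mu_i(t) b_i = 0, where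
   mu_i(t) = t / -h_i(x,y_t), and the KKT condition gives a + sum_i lam_i b_i = 0, so
   sum_i (mu_i(t) - lam_i) b_i = 0. Pairing this with y_t - y* yields the duality gap
   sum_i (mu_i(t) (-h_i(x,y* )) + lam_i (-h_i(x,y_t))) = k t, a sum of nonnegative terms;
   hence mu_i(t) = O(t) on the constraints inactive at y*, where lam_i = 0. For an active
   constraint i, LICQ provides V with <b_j,V> = delta_ij for all active j, and pairing with V
   expresses mu_i(t) - lam_i through the inactive mu_j(t). Thus |mu_i(t) - lam_i| = O(t).
   Only y* in y*(x), LICQ at y* and (LIN) at x are used. *)

From mathcomp Require Import all_boot all_order all_algebra.
From mathcomp Require Import all_classical all_reals all_analysis.
From mathcomp Require Import ring lra.
Set Implicit Arguments. Unset Strict Implicit. Unset Printing Implicit Defensive.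
Import Order.TTheory GRing.Theory Num.Theory.
Import numFieldNormedType.Exports.
Local Open Scope classical_set_scope.
Local Open Scope ring_scope.

Section row_vectors.
Variable R : realType.

Definition rdot m (u v : 'rV[R]_m) : R := \sum_(j < m) u 0 j * v 0 j.

Lemma rdotDr m (a u v : 'rV[R]_m) : rdot a (u + v) = rdot a u + rdot a v.
Proof. by rewrite /rdot -big_split; apply: eq_bigr => j _; rewrite !mxE mulrDr. Qed.

Lemma rdotZr m (a v : 'rV[R]_m) (s : R) : rdot a (s *: v) = s * rdot a v.
Proof. by rewrite /rdot mulr_sumr; apply: eq_bigr => j _; rewrite !mxE mulrCA. Qed.

Lemma rdotBr m (a u v : 'rV[R]_m) : rdot a (u - v) = rdot a u - rdot a v.
Proof. by rewrite rdotDr -scaleN1r rdotZr mulN1r. Qed.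

Lemma rdot_suml m k (c : 'I_k -> R) (b : 'I_k -> 'rV[R]_m) v :
  rdot (\sum_i c i *: b i) v = \sum_i c i * rdot (b i) v.
Proof.
rewrite /rdot; under eq_bigr do rewrite summxE mulr_suml.
rewrite exchange_big; apply: eq_bigr => i _; rewrite mulr_sumr.
by apply: eq_bigr => j _; rewrite mxE mulrA.
Qed.

Lemma free_rows_dual_basis m k (b : 'I_k -> 'rV[R]_m) (A : pred 'I_k) :
  (forall c : 'I_k -> R, (forall i, ~~ A i -> c i = 0) ->
     \sum_i c i *: b i = 0 -> forall i, c i = 0) ->
  exists V : 'I_k -> 'rV[R]_m, forall i j, A i -> rdot (b i) (V j) = (i == j)%:R.
Proof.
move=> freeA.
(* Appending the unit rows of the indices outside A makes the rows of [N | E] free; the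
   upper block of a right inverse of [N | E] then consists of the dual vectors. *)
pose N : 'M[R]_(k, m) := \matrix_i b i.
pose E : 'M[R]_k := diag_mx (\row_i (~~ A i)%:R).
have : row_free (row_mx N E).
  apply: inj_row_free => u; rewrite mul_mx_row => /eqP.
  rewrite row_mx_eq0 => /andP[/eqP uN /eqP uE].
  have uA i : ~~ A i -> u 0 i = 0.
    move=> nAi; have := congr1 (fun M : 'rV[R]_k => M 0 i) uE.
    by rewrite mul_mx_diag !mxE nAi mulr1.
  apply/rowP => i; rewrite mxE; apply: (freeA (fun i => u 0 i) uA).
  by rewrite -[RHS]uN mulmx_sum_row; apply: eq_bigr => j _; rewrite rowK.
case/row_freeP => B; rewrite -[B]vsubmxK mul_row_col => NEB.
exists (fun j => \row_l usubmx B l j) => i j Ai.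
have := congr1 (fun M : 'M[R]_k => M i j) NEB.
rewrite mul_diag_mx !mxE Ai mul0r addr0 => <-.
by apply: eq_bigr => l _; rewrite !mxE.
Qed.

End row_vectors.

Section real_calculus.
Variable R : realType.

Lemma derive_affine m (F : 'rV[R]_m -> R) a c :
  (forall y, F y = rdot a y + c) -> forall v p, 'D_v F p = rdot a v.
Proof.
move=> FE v p; apply: cvg_lim => //; apply: cvg_near_cst; near=> s.
have s0 : s != 0 by near: s; exact: nbhs_dnbhs_neq.
rewrite /= !FE rdotDr rdotZr.
have -> : s * rdot a v + rdot a p + c - (rdot a p + c) = s * rdot a v by ring.
by rewrite -[_ *: _]/(s^-1 * _) mulKf.
Unshelve. all: by end_near.
Qed.

Lemma is_derive_ln_affine (w d s : R) : 0 < w - s * d ->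
  is_derive s 1 (fun r => ln (w - r * d)) (- d / (w - s * d)).
Proof.
move=> ws0.
have lin : is_derive s 1 (fun r : R => w - r * d) (- d).
  have -> : (fun r : R => w - r * d) = (fun r => w - d * r).
    by apply/funext => r; rewrite mulrC.
  have := is_deriveB (is_derive_cst w s 1) (is_deriveZ d (is_derive_id s 1)).
  by rewrite sub0r [d *: 1]mulr1.
rewrite [_ / _]mulrC.
exact: (@is_derive1_comp _ (@ln R) (fun r => w - r * d) s _ _ (is_derive1_ln ws0) lin).
Qed.

Lemma derive_local_min (f : R -> R) (c df : R) : is_derive c 1 f df ->
  (\forall s \near c, derivable f s 1) -> (\forall s \near c, f c <= f s) -> df = 0.
Proof.
move=> fdf fdrv fmin.
have [e /= e0 ball_e] := (nbhs_ballP _ _).1 (filterI fdrv fmin).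
have itv_e r : r \in `]c - e, c + e[ -> derivable f r 1 /\ f c <= f r.
  by move=> rce; apply: ball_e; rewrite ball_itv.
have [_ <-] := fdf; have [_ ->] // : is_derive c 1 f 0.
apply: (@derive1_at_min _ f (c - e) (c + e)); first lra.
- by move=> r /itv_e[].
- by rewrite in_itv /=; apply/andP; split; lra.
- by move=> r /itv_e[].
Qed.

Lemma near0_forall_sub_mul_gt0 k (w e : 'I_k -> R) : (forall i, 0 < w i) ->
  \forall s \near (0 : R), forall i, 0 < w i - s * e i.
Proof.
move=> w_gt0; apply: (@filter_forall R _ (fun i s => 0 < w i - s * e i) (nbhs (0 : R))).
move=> i; have : w i - s * e i @[s --> (0 : R)] --> w i - 0 * e i.
  by apply: cvgB; [exact: cvg_cst | apply: cvgM; [exact: cvg_id | exact: cvg_cst]].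
by rewrite mul0r subr0 => /cvgr_gt; apply.
Qed.

Lemma is_derive_log_barrier_line k (p q t : R) (w e : 'I_k -> R) s :
  (forall i, 0 < w i - s * e i) ->
  is_derive s 1 (fun r => p + q * r - t * \sum_i ln (w i - r * e i))
    (q * 1 - t * \sum_i (- e i / (w i - s * e i))).
Proof.
move=> s_in; have := is_derive_sum (fun i => is_derive_ln_affine (s_in i)).
rewrite fct_sumE => Dsum.
have Dlin := is_deriveD (is_derive_cst p s 1) (is_deriveZ q (is_derive_id s 1)).
by have := is_deriveB Dlin (is_deriveZ t Dsum); rewrite add0r.
Qed.

Lemma cvg_at_right0_linear_bound (f : R -> R) (l C : R) :
  (forall t, 0 < t -> `|l - f t| <= C * t) -> f @ 0^'+ --> l.
Proof.
move=> fC; apply/cvgrPdist_le => e e0.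
have C1 : 0 < `|C| + 1 by rewrite ltr_wpDl.
near=> t.
have t0 : 0 < t by near: t; exact: nbhs_right_gt.
have te : t < e / (`|C| + 1) by near: t; apply: nbhs_right_lt; rewrite divr_gt0.
apply: le_trans (fC t t0) _.
have : C * t <= (`|C| + 1) * t by rewrite ler_pM2r // (le_trans (ler_norm C)) // lerDl.
move/le_trans; apply; rewrite mulrC -ler_pdivlMr //; exact: ltW.
Unshelve. all: by end_near.
Qed.

End real_calculus.

Section affine_lower_level.
Variables (R : realType) (n m k : nat).
Variables (g : 'rV[R]_n -> 'rV[R]_m -> R) (h : 'I_k -> 'rV[R]_n -> 'rV[R]_m -> R).
Variables (x : 'rV[R]_n) (a : 'rV[R]_m) (c : R) (b : 'I_k -> 'rV[R]_m) (d : 'I_k -> R).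
Hypothesis gE : forall y, g x y = rdot a y + c.
Hypothesis hE : forall i y, h i x y = rdot (b i) y + d i.

Lemma barrier_min_stationary t y : is_barrier_min g h t x y ->
  forall v, rdot a v + \sum_i t / - h i x y * rdot (b i) v = 0.
Proof.
move=> [y_in y_min] v.
pose w i := - h i x y; pose e i := rdot (b i) v.
pose phi s := g x y + rdot a v * s - t * \sum_i ln (w i - s * e i).
have hline s i : - h i x (y + s *: v) = w i - s * e i.
  by rewrite /w /e !hE rdotDr rdotZr; ring.
have phiE s : barrier g h t x (y + s *: v) = phi s.
  rewrite /barrier /phi !gE rdotDr rdotZr; under eq_bigr do rewrite hline.
  by ring.
have near_in : \forall s \near (0 : R), forall i, 0 < w i - s * e i.
  by apply: near0_forall_sub_mul_gt0 => i; rewrite oppr_gt0 y_in.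
have phi_derivable : \forall s \near 0, derivable phi s 1.
  apply: filterS near_in => s s_in.
  by case: (is_derive_log_barrier_line (g x y) (rdot a v) t s_in).
have phi_min : \forall s \near 0, phi 0 <= phi s.
  apply: filterS near_in => s s_in; rewrite -!phiE scale0r addr0.
  by apply: y_min => i; rewrite -oppr_gt0 hline.
have := derive_local_min
  (is_derive_log_barrier_line _ _ _ (nbhs_singleton near_in)) phi_derivable phi_min.
rewrite mulr1 mulr_sumr -sumrN => stat0; rewrite -[RHS]stat0; congr (_ + _).
by apply: eq_bigr => i _; rewrite mul0r subr0 /w /e; ring.
Qed.

Lemma KKT_stationary y lam : KKT_mult g h x y lam ->
  forall v, rdot a v + \sum_i lam i * rdot (b i) v = 0.
Proof.
move=> [_ [_ lam_stat]] v; rewrite -[RHS](lam_stat v) (derive_affine gE).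
by congr (_ + _); apply: eq_bigr => i _; rewrite (derive_affine (hE i)).
Qed.

Lemma LICQ_dual_basis y : LICQ h x y ->
  exists V : 'I_k -> 'rV[R]_m,
    forall i j, h i x y = 0 -> rdot (b i) (V j) = (i == j)%:R.
Proof.
move=> licq; have [V dualV] : exists V : 'I_k -> 'rV[R]_m,
    forall i j, h i x y == 0 -> rdot (b i) (V j) = (i == j)%:R.
  apply: free_rows_dual_basis => u u_act bu0; apply: licq => [i /u_act // | v].
  under eq_bigr do rewrite (derive_affine (hE _)).
  by rewrite -rdot_suml bu0 /rdot big1 // => j _; rewrite mxE mul0r.
by exists V => i j /eqP; exact: dualV.
Qed.

Variables (ys : 'rV[R]_m) (lam : 'I_k -> R) (yt : R -> 'rV[R]_m).
Hypotheses (ys_in : Yset h x ys) (lam_KKT : KKT_mult g h x ys lam).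
Hypothesis ys_LICQ : LICQ h x ys.
Hypothesis yt_min : forall t, 0 < t -> is_barrier_min g h t x (yt t).

Let mu t i := t / - h i x (yt t).

Lemma mu_sub_lam_orthogonal t : 0 < t ->
  forall v, \sum_i (mu t i - lam i) * rdot (b i) v = 0.
Proof.
move=> t0 v; under eq_bigr do rewrite mulrBl.
rewrite sumrB; apply/eqP; rewrite subr_eq0; apply/eqP/(@addrI _ (rdot a v)).
by rewrite (barrier_min_stationary (yt_min t0)) (KKT_stationary lam_KKT).
Qed.

Lemma complementarity_gap t : 0 < t ->
  \sum_i (mu t i * - h i x ys + lam i * - h i x (yt t)) = k%:R * t.
Proof.
move=> t0; have [yt_in _] := yt_min t0; have [_ [lam_slack _]] := lam_KKT.
have -> : k%:R * t = \sum_(i < k) t by rewrite sumr_const card_ord mulr_natl.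
apply/eqP; rewrite -subr_eq0 -sumrB; apply/eqP.
rewrite -[RHS](mu_sub_lam_orthogonal t0 (yt t - ys)); apply: eq_bigr => i _.
have mu_h : mu t i * h i x (yt t) = - t by rewrite /mu; field; rewrite lt_eqF ?yt_in.
have -> : rdot (b i) (yt t - ys) = h i x (yt t) - h i x ys.
  by rewrite rdotBr !hE; ring.
by rewrite mulrBl !mulrBr mu_h lam_slack; ring.
Qed.

Lemma inactive_multiplier_dist_le i t : h i x ys != 0 -> 0 < t ->
  `|lam i - mu t i| <= k%:R / - h i x ys * t.
Proof.
move=> inact t0; have [yt_in _] := yt_min t0; have [lam_ge0 [lam_slack _]] := lam_KKT.
have hys : 0 < - h i x ys by rewrite oppr_gt0 lt_neqAle inact ys_in.
have mu_ge0 j : 0 <= mu t j by rewrite divr_ge0 ?ltW // oppr_gt0 yt_in.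
have lam_h_ge0 j : 0 <= lam j * - h j x (yt t).
  by rewrite mulr_ge0 ?lam_ge0 // oppr_ge0 ltW ?yt_in.
have term_ge0 j : 0 <= mu t j * - h j x ys + lam j * - h j x (yt t).
  by rewrite addr_ge0 // mulr_ge0 // oppr_ge0 ys_in.
have /eqP := lam_slack i; rewrite mulf_eq0 (negbTE inact) orbF => /eqP ->.
rewrite sub0r normrN ger0_norm // mulrAC ler_pdivlMr // -(complementarity_gap t0).
by rewrite (bigD1 i) //= -addrA lerDl addr_ge0 ?sumr_ge0.
Qed.

Lemma multiplier_dist_le_linear i :
  exists C, forall t, 0 < t -> `|lam i - mu t i| <= C * t.
Proof.
have [act | inact] := eqVneq (h i x ys) 0; last first.
  by exists (k%:R / - h i x ys) => t; exact: inactive_multiplier_dist_le.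
have [V dualV] := LICQ_dual_basis ys_LICQ.
exists (\sum_(j | h j x ys != 0) k%:R / - h j x ys * `|rdot (b j) (V i)|) => t t0.
have act_sum : \sum_(j | ~~ (h j x ys != 0)) (mu t j - lam j) * rdot (b j) (V i)
    = mu t i - lam i.
  rewrite (bigD1 i) ?act ?eqxx //= dualV // eqxx mulr1 big1 ?addr0 //.
  by move=> j /andP[/negPn/eqP jact ji]; rewrite dualV // (negbTE ji) mulr0.
have := mu_sub_lam_orthogonal t0 (V i).
rewrite (bigID (fun j => h j x ys != 0)) /= act_sum => sum0.
have -> : lam i - mu t i =
    \sum_(j | h j x ys != 0) (mu t j - lam j) * rdot (b j) (V i) by lra.
apply: le_trans (ler_norm_sum _ _ _) _.
rewrite mulr_suml; apply: ler_sum => j inact_j.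
by rewrite normrM distrC mulrAC ler_wpM2r // inactive_multiplier_dist_le.
Qed.

End affine_lower_level.

Theorem lemma13 (R : realType) (n m k : nat)
  (f g : 'rV[R]_n -> 'rV[R]_m -> R) (h : 'I_k -> 'rV[R]_n -> 'rV[R]_m -> R)
  (X : set 'rV[R]_n)
  (* (A1) *)
  (A1f : C1 (uncurryF f)) (A1g : C2 (uncurryF g)) (A1h : forall i, C2 (uncurryF (h i)))
  (* (A2) *)
  (A2conv : convex_setR X) (A2comp : compact X)
  (A2slater : forall x, X x -> exists y, forall i, h i x y < 0)
  (* (A3) LICQ *)
  (A3 : forall x y, X x -> ystar g h x y -> LICQ h x y)
  (* (LIN) *)
  (LINg : forall x, X x -> affine (g x))
  (LINh : forall x, X x -> forall i, affine (h i x))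
  (LINcomp : forall x, X x -> compact (Yset h x))
  (x : 'rV[R]_n) (xX : X x)
  (ys : 'rV[R]_m) (ys_unique : ystar g h x = [set ys])
  (lam : 'I_k -> R) (lamKKT : KKT_mult g h x ys lam)
  (yt : R -> 'rV[R]_m) (ytmin : forall t, 0 < t -> is_barrier_min g h t x (yt t)) :
  forall i : 'I_k,
    (fun t => t / (- h i x (yt t))) @ 0^'+ --> lam i.
Proof.
have ys_opt : ystar g h x ys by rewrite ys_unique.
have [a [c gE]] := LINg x xX.
have /choice[bd hE] : forall i, exists p : 'rV[R]_m * R,
    forall y, h i x y = rdot p.1 y + p.2.
  by move=> i; have [bi [di hiE]] := LINh x xX i; exists (bi, di).
move=> i; have [C distC] :=
  multiplier_dist_le_linear gE hE ys_opt.1 lamKKT (A3 x ys xX ys_opt) ytmin i.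
exact: cvg_at_right0_linear_bound distC.
Qed.
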